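(* Consider a generalized discrete preference game on a tree metric: a finite set $V$ of players, a directed graph on $V$ with nonnegative weights $w_{ij}$ on arcs $(i,j)$ (with $N_i$ the set of out-neighbours of $i$), a finite tree $\mathcal{T}$ with positive edge lengths whose node set $L$ is the strategy set and whose shortest-path metric is $d$, and for each player $i$ and node $v\in L$ a nonnegative penalty $p_i(v)$. The cost of player $i$ in profile $z=(z_i)_{i\in V}\in L^V$ is $c_i(z)=\sum_{v\in L} p_i(v)\, d(v,z_i)+\sum_{j\in N_i} w_{ij}\, d(z_i,z_j)$. Fix a root $r$ of $\mathcal{T}$ and run the following procedure (Tree Metric Algo): initially set $z_i\leftarrow r$ for every player $i$; while there exists a player $i$ and a child $v$ of $z_i$ (in $\mathcal{T}$ rooted at $r$) such that changing $z_i$ to $v$ (keeping all other strategies fixed) strictly decreases $c_i$, set $z_i\leftarrow v$ for some such pair. Then this procedure terminates (after at most $|V|\cdot|L|$ moves), and the final profile $z$ is a pure Nash equilibrium, i.e. no player can strictly decrease her cost by changing only her own strategy. In particular such a game always has a pure Nash equilibrium. *)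

From mathcomp Require Import all_boot all_order all_algebra.
Set Implicit Arguments. Unset Strict Implicit. Unset Printing Implicit Defensive.
Import Order.TTheory GRing.Theory Num.Theory.
Local Open Scope ring_scope.

Section TreeGame.
Variables (R : realFieldType) (V L : finType).

(* A finite tree on node set L, rooted at r, given by a parent map [par]
   (par r = r, every node reaches r by iterating par) and, for each
   non-root node v, the (positive) length [len v] of the edge {v, par v}. *)
Definition rooted_tree (r : L) (par : L -> L) : Prop :=
  par r = r /\ forall v : L, exists k : nat, iter k par v = r.

Definition is_child (r : L) (par : L -> L) (u v : L) : bool :=
  (v != r) && (par v == u).

Definition tedge (r : L) (par : L -> L) : rel L :=
  fun u v => is_child r par u v || is_child r par v u.

(* length of the edge {u, v} (meaningful when tedge r par u v) *)
Definition elen (r : L) (par : L -> L) (len : L -> R) (u v : L) : R :=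
  if is_child r par u v then len v else len u.

Definition walk_len (r : L) (par : L -> L) (len : L -> R) (u : L) (s : seq L) : R :=
  \sum_(e <- zip (u :: s) s) elen r par len e.1 e.2.

Definition shortest_path_metric (r : L) (par : L -> L) (len : L -> R)
  (d : L -> L -> R) : Prop :=
  forall u v : L,
    (exists s : seq L, [/\ path (tedge r par) u s, last u s = v
                         & walk_len r par len u s = d u v]) /\
    (forall s : seq L, path (tedge r par) u s -> last u s = v ->
                       d u v <= walk_len r par len u s).

Definition upd (z : V -> L) (i : V) (x : L) : V -> L :=
  fun k => if k == i then x else z k.

Definition cost (d : L -> L -> R) (p : V -> L -> R) (arc : rel V)
  (w : V -> V -> R) (z : V -> L) (i : V) : R :=
  \sum_(v : L) p i v * d v (z i) + \sum_(j | arc i j) w i j * d (z i) (z j).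

Definition tm_step (r : L) (par : L -> L) (d : L -> L -> R) (p : V -> L -> R)
  (arc : rel V) (w : V -> V -> R) (z z' : V -> L) : Prop :=
  exists (i : V) (v : L), [/\ is_child r par (z i) v,
     cost d p arc w (upd z i v) i < cost d p arc w z i & z' = upd z i v].

Definition tm_run (r : L) (par : L -> L) (d : L -> L -> R) (p : V -> L -> R)
  (arc : rel V) (w : V -> V -> R) (zs : nat -> V -> L) (n : nat) : Prop :=
  (forall i, zs 0%N i = r) /\
  (forall k, (k < n)%N -> tm_step r par d p arc w (zs k) (zs k.+1)).

Definition pure_nash (d : L -> L -> R) (p : V -> L -> R) (arc : rel V)
  (w : V -> V -> R) (z : V -> L) : Prop :=
  forall (i : V) (x : L), cost d p arc w z i <= cost d p arc w (upd z i x) i.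

End TreeGame.

(* For a player i and a set S of tree nodes, let the mass of S be the penalty
   weight p_i(S) plus the weight of the arcs from i to players currently in S.
   Moving i from par c down to its child c changes c_i by len c times (mass of
   the complement of subtree c - mass of subtree c). Since players only move
   down, the subtrees containing a player's position only gain mass, so the
   invariant "the subtree below z_i weighs at least as much as its complement"
   survives every move. Together with the absence of improving downward moves,
   this invariant makes every unilateral deviation non-improving: leaving the
   subtree of z_i, or entering the subtree of one of its children c (which is at
   most as heavy as its complement). Each move strictly increases the number of
   pairs (i, v) with v an ancestor of z_i, which is at most |V| |L|. *)

From Pilot Require Import Defs.
From mathcomp Require Import all_boot all_order all_algebra.
From mathcomp Require Import lra.
Set Implicit Arguments. Unset Strict Implicit. Unset Printing Implicit Defensive.
Import Order.TTheory GRing.Theory Num.Theory.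
Local Open Scope ring_scope.

Lemma weighted_sum_shift (R : realDomainType) (I : finType) (P s : pred I)
    (a D D' : I -> R) (t : R) :
  (forall k, P k -> 0 <= a k) ->
  (forall k, P k -> s k -> D k + t <= D' k) ->
  (forall k, P k -> ~~ s k -> D k - t <= D' k) ->
  \sum_(k | P k) a k * D k
    + t * (\sum_(k | P k && s k) a k - \sum_(k | P k && ~~ s k) a k)
  <= \sum_(k | P k) a k * D' k.
Proof.
move=> a_ge0 Din Dout.
rewrite (bigID s P (fun k => a k * D' k)) (bigID s P (fun k => a k * D k)) /=.
have le_in : \sum_(k | P k && s k) (a k * D k + t * a k)
    <= \sum_(k | P k && s k) a k * D' k.
  apply: ler_sum => k /andP[Pk sk].
  by rewrite (mulrC t) -mulrDr ler_wpM2l ?a_ge0 ?Din.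
have le_out : \sum_(k | P k && ~~ s k) (a k * D k - t * a k)
    <= \sum_(k | P k && ~~ s k) a k * D' k.
  apply: ler_sum => k /andP[Pk sk].
  by rewrite (mulrC t) -mulrBr ler_wpM2l ?a_ge0 ?Dout.
rewrite big_split /= -mulr_sumr in le_in; rewrite sumrB -mulr_sumr in le_out.
lra.
Qed.

Section TreeGame.
Variables (L : finType) (r : L) (par : L -> L).
Hypothesis tree : rooted_tree r par.

Definition subtree (c : L) : pred L := fun u => fconnect par u c.

Lemma iter_par_root k : iter k par r = r.
Proof. by elim: k => //= k ->; rewrite tree.1. Qed.

Lemma iter_par_cycle v k : iter k.+1 par v = v -> v = r.
Proof.
move=> cyc; have [m to_r] := tree.2 v.
have periodic t : iter (t * k.+1) par v = v.
  by elim: t => // t IH; rewrite mulSn iterD IH cyc.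
by rewrite -(periodic m) -(subnK (leq_pmulr m (ltn0Sn k))) iterD to_r iter_par_root.
Qed.

Lemma subtree_refl c : subtree c c.
Proof. exact: connect0. Qed.

Lemma subtree_root u : subtree r u.
Proof. by have [k <-] := tree.2 u; exact: fconnect_iter. Qed.

Lemma subtree_par c u : subtree c (par u) -> subtree c u.
Proof. exact/connect_trans/fconnect1. Qed.

Lemma subtree_par_neq c u : subtree c u -> u != c -> subtree c (par u).
Proof. by rewrite /subtree fconnect_eqVf eq_sym => /orP[->|]. Qed.

Lemma par_notin_subtree v : v != r -> ~~ subtree v (par v).
Proof.
move=> vr; apply: contra vr => /iter_findex; rewrite -iterSr => /iter_par_cycle ->.
exact: eqxx.
Qed.

Lemma child_on_path y x : subtree y x -> x != y ->
  exists c, [/\ c != r, par c = y & subtree c x].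
Proof.
move=> /iter_findex; move: (findex par x y) => k; elim: k x => [|k IH] x xy xny.
  by rewrite -xy eqxx in xny.
have [pxy|pxy] := eqVneq (par x) y.
  exists x; split; [|by []|exact: subtree_refl].
  by apply: contraNneq xny => xr; rewrite -pxy xr tree.1.
rewrite iterSr in xy; have [c [cr pc sub]] := IH _ xy pxy.
by exists c; split; last exact: subtree_par.
Qed.

Lemma is_child_par v : v != r -> is_child r par v (par v) = false.
Proof.
move=> vr; apply: contraNF vr => /andP[_ /eqP ppv].
by apply/eqP; apply: (@iter_par_cycle v 1).
Qed.

Lemma tedge_leave_subtree c u x : c != r -> subtree c u -> ~~ subtree c x ->
  tedge r par u x -> u = c /\ x = par c.
Proof.
move=> cr cu cx /orP[/andP[_ /eqP pxu] | /andP[_ /eqP pux]].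
  by rewrite -pxu in cu; rewrite (subtree_par cu) in cx.
have uc : u = c.
  by apply/eqP; apply: contraNT cx => /(subtree_par_neq cu); rewrite pux.
by rewrite -pux uc.
Qed.

Variables (R : realFieldType) (len : L -> R) (d : L -> L -> R).
Hypothesis len_gt0 : forall v : L, v != r -> 0 < len v.
Hypothesis d_shortest : shortest_path_metric r par len d.

Local Notation edge := (tedge r par).
Local Notation elen := (elen r par len).
Local Notation wlen := (walk_len r par len).

Lemma elen_par v : v != r -> elen (par v) v = len v /\ elen v (par v) = len v.
Proof. by move=> vr; rewrite /Defs.elen is_child_par // /is_child vr eqxx. Qed.

Lemma elen_sym u x : edge u x -> elen u x = elen x u.
Proof. by case/orP=> /andP[vr /eqP <-]; have [-> ->] := elen_par vr. Qed.

Lemma elen_ge0 u x : edge u x -> 0 <= elen u x.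
Proof.
case/orP=> /andP[vr /eqP <-]; have [e1 e2] := elen_par vr.
  by rewrite e1; exact/ltW/len_gt0.
by rewrite e2; exact/ltW/len_gt0.
Qed.

Lemma wlen_cons u x s : wlen u (x :: s) = elen u x + wlen x s.
Proof. by rewrite /walk_len /= big_cons. Qed.

Lemma wlen_cat u s1 s2 : wlen u (s1 ++ s2) = wlen u s1 + wlen (last u s1) s2.
Proof.
elim: s1 u => [|x s1 IH] u /=; first by rewrite /walk_len big_nil add0r.
by rewrite !wlen_cons IH addrA.
Qed.

Lemma wlen_ge0 u s : path edge u s -> 0 <= wlen u s.
Proof.
elim: s u => [|x s IH] u /=; first by rewrite /walk_len big_nil.
by case/andP=> ux xs; rewrite wlen_cons addr_ge0 ?elen_ge0 ?IH.
Qed.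

Lemma walk_rev u s : path edge u s ->
  exists t, [/\ path edge (last u s) t, last (last u s) t = u
              & wlen (last u s) t = wlen u s].
Proof.
elim: s u => [|x s IH] u /=; first by exists [::].
case/andP=> ux /IH[t [xt tu tlen]].
exists (rcons t u); rewrite rcons_path last_rcons xt tu -cats1 wlen_cat tu tlen.
by rewrite wlen_cons /walk_len /= big_cons big_nil addr0 addrC elen_sym // /tedge orbC.
Qed.

Lemma walk_leave_subtree c a s : c != r -> subtree c a ->
  ~~ subtree c (last a s) -> path edge a s ->
  exists s1 s2, [/\ path edge a s1, last a s1 = c,
    path edge (par c) s2, last (par c) s2 = last a s &
    wlen a s = wlen a s1 + len c + wlen (par c) s2].
Proof.
move=> cr; elim: s a => [|x s IH] a ca /=; first by rewrite ca.
move=> cs /andP[ax xs].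
have [cx|cx] := boolP (subtree c x).
  have [s1 [s2 [as1 s1c cs2 s2s len_s]]] := IH x cx cs xs.
  exists (x :: s1), s2; split=> //; first by rewrite /= ax.
  by rewrite !wlen_cons len_s !addrA.
case: (tedge_leave_subtree cr ca cx ax) => -> -> in xs *.
exists [::], s; split=> //.
by rewrite wlen_cons (elen_par cr).2 {2}/walk_len big_nil add0r.
Qed.

Lemma d_ge0 u v : 0 <= d u v.
Proof. by have [[s [us _ <-]] _] := d_shortest u v; exact: wlen_ge0. Qed.

Lemma d_xx u : d u u = 0.
Proof.
apply/eqP; rewrite eq_le d_ge0 andbT.
by have := (d_shortest u u).2 [::] erefl erefl; rewrite /walk_len big_nil.
Qed.

Lemma d_triangle a b c : d a c <= d a b + d b c.
Proof.
have [[s1 [as1 s1b <-]] _] := d_shortest a b.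
have [[s2 [bs2 s2c <-]] _] := d_shortest b c.
rewrite -s1b in bs2 s2c *; rewrite -wlen_cat; apply: (d_shortest a c).2.
  by rewrite cat_path as1.
by rewrite last_cat.
Qed.

Lemma d_sym a b : d a b = d b a.
Proof.
suff d_le u v : d u v <= d v u by apply/eqP; rewrite eq_le !d_le.
have [[s [vs <- <-]] _] := d_shortest v u.
have [t [st tv <-]] := walk_rev vs.
by apply: (d_shortest _ _).2; rewrite ?tv.
Qed.

Lemma d_ge_split c a b : c != r -> subtree c a -> ~~ subtree c b ->
  d a c + len c + d (par c) b <= d a b.
Proof.
move=> cr ca cb; have [[s [ab sb <-]] _] := d_shortest a b.
rewrite -sb in cb; have [s1 [s2 [as1 s1c cs2 s2s ->]]] := walk_leave_subtree cr ca cb ab.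
apply: lerD; first by rewrite lerD2r (d_shortest a c).2.
by rewrite (d_shortest (par c) b).2 // s2s.
Qed.

Lemma d_par v : v != r -> d v (par v) = len v.
Proof.
move=> vr; apply/eqP; rewrite eq_le; apply/andP; split.
  have := (d_shortest v (par v)).2 [:: par v].
  rewrite wlen_cons (elen_par vr).2 /walk_len big_nil addr0; apply=> //=.
  by rewrite andbT /tedge /is_child vr eqxx orbT.
have := d_ge_split vr (subtree_refl v) (par_notin_subtree vr).
by rewrite d_xx add0r d_xx addr0.
Qed.

Lemma d_split c a b : c != r -> subtree c a -> ~~ subtree c b ->
  d a b = d a c + len c + d (par c) b.
Proof.
move=> cr ca cb; apply/eqP; rewrite eq_le d_ge_split // andbT -(d_par cr) -addrA.
by rewrite (le_trans (d_triangle _ c _)) // lerD2l d_triangle.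
Qed.

Lemma d_via_subtree_root c a b : c != r -> subtree c a -> ~~ subtree c b ->
  d a b = d a c + d c b.
Proof.
move=> cr ca cb; rewrite (d_split cr ca cb) (d_split cr (subtree_refl c) cb).
by rewrite d_xx add0r addrA.
Qed.

Lemma d_via_par c a b : c != r -> subtree c a -> ~~ subtree c b ->
  d a b = d a (par c) + d (par c) b.
Proof.
move=> cr ca cb; have cpc := par_notin_subtree cr.
by rewrite (d_split cr ca cb) (d_split cr ca cpc) d_xx addr0.
Qed.

Variables (V : finType) (arc : rel V) (w : V -> V -> R) (p : V -> L -> R).
Hypothesis w_ge0 : forall i j : V, 0 <= w i j.
Hypothesis p_ge0 : forall (i : V) (v : L), 0 <= p i v.

Local Notation cost := (cost d p arc w).

Definition cost_at (z : V -> L) (i : V) (x : L) : R := cost (upd z i x) i.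

(* Self-arcs are left out: their cost term w i i * d x x vanishes, and leaving
   them out makes [mass z i] independent of [z i]. *)
Definition mass (z : V -> L) (i : V) (s : pred L) : R :=
  \sum_(v | s v) p i v + \sum_(j | arc i j && (j != i) && s (z j)) w i j.

Lemma upd_same (z : V -> L) i x : upd z i x i = x.
Proof. by rewrite /upd eqxx. Qed.

Lemma upd_other (z : V -> L) i x j : j != i -> upd z i x j = z j.
Proof. by rewrite /upd => /negbTE ->. Qed.

Lemma eq_cost z z' i : z =1 z' -> cost z i = cost z' i.
Proof.
move=> zz'; rewrite /Defs.cost zz'; congr (_ + _).
by apply: eq_bigr => j _; rewrite zz'.
Qed.

Lemma cost_at_self z i : cost_at z i (z i) = cost z i.
Proof. by apply: eq_cost => k; rewrite /upd; case: eqP => // ->. Qed.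

Lemma cost_atE z i x : cost_at z i x =
  \sum_v p i v * d x v + \sum_(j | arc i j && (j != i)) w i j * d x (z j).
Proof.
rewrite /cost_at /Defs.cost {1}/upd eqxx; congr (_ + _).
  by apply: eq_bigr => v _; rewrite d_sym.
rewrite (bigID (fun j => j != i)) /= [X in _ + X]big1 ?addr0.
  by apply: eq_bigr => j /andP[_ ji]; rewrite /upd (negbTE ji) eqxx.
by move=> j /andP[_]; rewrite negbK => /eqP ->; rewrite /upd eqxx d_xx mulr0.
Qed.

Lemma eq_mass z i s s' : s =1 s' -> mass z i s = mass z i s'.
Proof.
move=> ss'; rewrite /mass (eq_bigl _ _ ss'); congr (_ + _).
by apply: eq_bigl => j; rewrite ss'.
Qed.

Lemma cost_at_shift z i x y (s : pred L) t :
  (forall q, s q -> d y q + t <= d x q) ->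
  (forall q, ~~ s q -> d y q - t <= d x q) ->
  cost_at z i y + t * (mass z i s - mass z i (predC s)) <= cost_at z i x.
Proof.
move=> d_in d_out; rewrite !cost_atE /mass.
have := @weighted_sum_shift R L xpredT s (p i) (d y) (d x) t
  (fun k _ => p_ge0 i k) (fun k _ => d_in k) (fun k _ => d_out k).
have := @weighted_sum_shift R V (fun j => arc i j && (j != i)) (s \o z) (w i)
  (d y \o z) (d x \o z) t (fun k _ => w_ge0 i k)
  (fun k _ => d_in (z k)) (fun k _ => d_out (z k)).
rewrite /=; lra.
Qed.

Lemma cost_at_leave_subtree z i y x : y != r -> ~~ subtree y x ->
  cost_at z i y + d y x * (mass z i (subtree y) - mass z i (predC (subtree y)))
  <= cost_at z i x.
Proof.
move=> yr yx; apply: cost_at_shift => q yq.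
  by rewrite (d_sym x) (d_via_subtree_root yr yq yx) (d_sym q).
by rewrite lerBlDr addrC d_triangle.
Qed.

Lemma cost_at_enter_subtree z i c x : c != r -> subtree c x ->
  cost_at z i (par c)
    + d (par c) x * (mass z i (predC (subtree c)) - mass z i (subtree c))
  <= cost_at z i x.
Proof.
move=> cr cx; rewrite [mass z i (subtree c)](@eq_mass _ _ _ (predC (predC (subtree c)))).
  apply: cost_at_shift => q /= cq.
    by rewrite (d_via_par cr cx cq) (d_sym x) addrC.
  by rewrite lerBlDr addrC d_triangle.
by move=> q /=; rewrite negbK.
Qed.

Lemma improving_child_mass z i c : c != r -> cost_at z i c < cost_at z i (par c) ->
  mass z i (predC (subtree c)) < mass z i (subtree c).
Proof.
move=> cr improving; have := cost_at_enter_subtree z i cr (subtree_refl c).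
rewrite d_sym d_par // -subr_lt0 => le_c.
have : len c * (mass z i (predC (subtree c)) - mass z i (subtree c)) < 0 by lra.
by rewrite pmulr_rlt0 ?len_gt0 // subr_lt0.
Qed.

Lemma nonimproving_child_mass z i c : c != r ->
  cost_at z i (par c) <= cost_at z i c ->
  mass z i (subtree c) <= mass z i (predC (subtree c)).
Proof.
move=> cr not_improving; have := cost_at_leave_subtree z i cr (par_notin_subtree cr).
rewrite d_par // => le_c.
have : len c * (mass z i (subtree c) - mass z i (predC (subtree c))) <= 0 by lra.
by rewrite pmulr_rle0 ?len_gt0 // subr_le0.
Qed.

Definition subtree_majority (z : V -> L) : Prop :=
  forall i, z i != r -> mass z i (predC (subtree (z i))) <= mass z i (subtree (z i)).

Lemma subtree_majority_root z : (forall i, z i = r) -> subtree_majority z.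
Proof. by move=> at_root i; rewrite at_root eqxx. Qed.

Lemma pure_nash_of_stuck z : subtree_majority z ->
  (forall i c, is_child r par (z i) c -> cost z i <= cost_at z i c) ->
  pure_nash d p arc w z.
Proof.
move=> major stuck i x; rewrite -cost_at_self -/(cost_at z i x).
have [zx|zx] := boolP (subtree (z i) x).
  have [->|xz] := eqVneq x (z i); first exact: lexx.
  have [c [cr pc cx]] := child_on_path zx xz.
  have heavy : mass z i (subtree c) <= mass z i (predC (subtree c)).
    apply: nonimproving_child_mass => //.
    by rewrite pc cost_at_self stuck // /is_child cr pc eqxx.
  apply: le_trans (cost_at_enter_subtree z i cr cx).
  by rewrite pc lerDl mulr_ge0 ?d_ge0 // subr_ge0.
have zr : z i != r by apply: contraNneq zx => ->; exact: subtree_root.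
apply: le_trans (cost_at_leave_subtree z i zr zx).
by rewrite lerDl mulr_ge0 ?d_ge0 // subr_ge0 major.
Qed.

Lemma mass_upd_self z i x (s : pred L) : mass (upd z i x) i s = mass z i s.
Proof.
rewrite /mass; congr (_ + _); apply: eq_bigl => j.
by case: (eqVneq j i) => [->|ji]; rewrite ?eqxx ?andbF // upd_other.
Qed.

Lemma le_mass z1 z2 i (s : pred L) :
  (forall j, s (z1 j) -> s (z2 j)) -> mass z1 i s <= mass z2 i s.
Proof.
move=> mono; rewrite /mass lerD2l [leLHS]big_mkcond [leRHS]big_mkcond /=.
apply: ler_sum => j _; case: (arc i j && (j != i)) => /=; last exact: lexx.
case: ifP => [/mono -> | _]; first exact: lexx.
by case: ifP => _; [exact: w_ge0 | exact: lexx].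
Qed.

Lemma subtree_majority_step z z' : subtree_majority z ->
  tm_step r par d p arc w z z' -> subtree_majority z'.
Proof.
move=> major [k [v [/andP[vr /eqP pv] improving ->]]] i.
have deeper j c : subtree c (z j) -> subtree c (upd z k v j).
  by rewrite /upd; case: eqP => // ->; rewrite -pv; exact: subtree_par.
have [-> _|ik] := eqVneq i k.
  rewrite upd_same !mass_upd_self; apply/ltW/improving_child_mass => //.
  by rewrite pv cost_at_self.
rewrite upd_other // => zr.
apply: le_trans (le_trans _ (major i zr)) (le_mass _ (deeper^~ _)).
by apply: le_mass => j /=; apply: contra; exact: deeper.
Qed.

Definition ancestor_count (z : V -> L) : nat :=
  #|[set ic : V * L | subtree ic.2 (z ic.1)]|.

Lemma ancestor_count_le z : (ancestor_count z <= #|V| * #|L|)%N.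
Proof. by rewrite /ancestor_count -card_prod max_card. Qed.

Lemma ancestor_count_step z z' :
  tm_step r par d p arc w z z' -> (ancestor_count z < ancestor_count z')%N.
Proof.
move=> [k [v [/andP[vr /eqP pv] _ ->]]]; apply/proper_card/properP; split.
  apply/subsetP => -[j c]; rewrite !inE /=.
  by rewrite /upd; case: eqP => // ->; rewrite -pv; exact: subtree_par.
exists (k, v); rewrite !inE /=; first by rewrite upd_same subtree_refl.
by rewrite -pv par_notin_subtree.
Qed.

Lemma tm_run_majority zs n k : tm_run r par d p arc w zs n -> (k <= n)%N ->
  subtree_majority (zs k).
Proof.
case=> start steps; elim: k => [|k IH] kn; first exact: subtree_majority_root.
exact: subtree_majority_step (IH (ltnW kn)) (steps k kn).
Qed.

Lemma tm_run_ancestor_count zs n k : tm_run r par d p arc w zs n -> (k <= n)%N ->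
  (k <= ancestor_count (zs k))%N.
Proof.
case=> _ steps; elim: k => // k IH kn.
exact: leq_ltn_trans (IH (ltnW kn)) (ancestor_count_step (steps k kn)).
Qed.

Lemma improving_move_dec z : (exists z', tm_step r par d p arc w z z') \/
  (forall i c, is_child r par (z i) c -> cost z i <= cost_at z i c).
Proof.
have [|stuck] :=
  boolP [exists i, exists c, is_child r par (z i) c && (cost_at z i c < cost z i)].
  by case/existsP=> i /existsP[c /andP[ic lt]]; left; exists (upd z i c), i, c; split.
right=> i c ic; rewrite leNgt; apply: contra stuck => lt.
by apply/existsP; exists i; apply/existsP; exists c; rewrite ic.
Qed.

Lemma pure_nash_from z : subtree_majority z -> exists z', pure_nash d p arc w z'.
Proof.
have [n] := ubnP (#|V| * #|L| - ancestor_count z); elim: n z => // n IH z lt_n major.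
have [[z' st]|stuck] := improving_move_dec z; last first.
  by exists z; exact: pure_nash_of_stuck.
apply: IH (subtree_majority_step major st); rewrite -ltnS (leq_trans _ lt_n) // ltnS.
have lt_count := ancestor_count_step st.
by rewrite ltn_sub2l // (leq_trans lt_count) ?ancestor_count_le.
Qed.

Lemma tm_run_length zs n : tm_run r par d p arc w zs n -> (n <= #|V| * #|L|)%N.
Proof.
by move=> run; rewrite (leq_trans (tm_run_ancestor_count run (leqnn n))) ?ancestor_count_le.
Qed.

Lemma tm_run_final_nash zs n : tm_run r par d p arc w zs n ->
  ~ (exists z', tm_step r par d p arc w (zs n) z') -> pure_nash d p arc w (zs n).
Proof.
move=> run no_step.
apply: pure_nash_of_stuck (tm_run_majority run (leqnn n)) _ => i c ic.
by rewrite leNgt; apply/negP => lt; apply: no_step; exists (upd (zs n) i c), i, c.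
Qed.

Lemma exists_pure_nash : exists z, pure_nash d p arc w z.
Proof. exact: pure_nash_from (subtree_majority_root _). Qed.

End TreeGame.

Theorem theorem3 (R : realFieldType) (V L : finType)
  (arc : rel V) (w : V -> V -> R) (p : V -> L -> R)
  (r : L) (par : L -> L) (len : L -> R) (d : L -> L -> R) :
  rooted_tree r par ->
  (forall v : L, v != r -> 0 < len v) ->
  shortest_path_metric r par len d ->
  (forall i j : V, 0 <= w i j) ->
  (forall (i : V) (v : L), 0 <= p i v) ->
  (* termination within |V| * |L| moves *)
  (forall (zs : nat -> V -> L) (n : nat),
     tm_run r par d p arc w zs n -> (n <= #|V| * #|L|)%N) /\
  (* the final profile is a pure Nash equilibrium *)
  (forall (zs : nat -> V -> L) (n : nat),
     tm_run r par d p arc w zs n ->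
     ~ (exists z', tm_step r par d p arc w (zs n) z') ->
     pure_nash d p arc w (zs n)) /\
  (* in particular a pure Nash equilibrium exists *)
  (exists z : V -> L, pure_nash d p arc w z).
Proof.
move=> tree len_gt0 d_shortest w_ge0 p_ge0.
split; first by move=> zs n /(tm_run_length tree).
split; first by move=> zs n /(tm_run_final_nash tree len_gt0 d_shortest w_ge0 p_ge0).
exact: (exists_pure_nash tree len_gt0 d_shortest arc w_ge0 p_ge0).
Qed.
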